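(* Let $n\ge4$. Then $\operatorname{zir}(C_n)=\operatorname{Z}(C_n)=\overline{\operatorname{Z}}(C_n)=2$ and $\operatorname{ZIR}(C_n)=\lfloor n/2\rfloor$.
   Context: $C_n$ is the cycle on $n$ vertices. Zero forcing: a blue vertex $u$ changes a white vertex $w$ to blue if $w$ is the only white neighbor of $u$; $B$ is a zero forcing set if from blue set $B$ eventually all vertices are blue; $\operatorname{Z}(G)$ is the minimum size of a zero forcing set and $\overline{\operatorname{Z}}(G)$ the maximum size of an inclusion-minimal zero forcing set. A nonempty $F\subseteq V(G)$ is a fort if every $v\notin F$ has $|N(v)\cap F|\ne1$. A private fort of $x\in S$ relative to $S$ is a fort $F$ with $S\cap F=\{x\}$; $S$ is a ZIr-set if every element of $S$ has a private fort. $\operatorname{zir}(G)$ / $\operatorname{ZIR}(G)$ are the minimum / maximum cardinality of an inclusion-maximal ZIr-set. *)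

From mathcomp Require Import all_boot.
Set Implicit Arguments. Unset Strict Implicit. Unset Printing Implicit Defensive.

Section Graphs.
Variables (T : finType) (adj : rel T).

Definition nbhd (v : T) : {set T} := [set u | adj v u].

(* One-vertex-at-a-time zero forcing: [zf_derives B C] means that starting
   from the blue set B one can reach the blue set C by a sequence of forces
   (a blue u forces a white w when w is the only white neighbour of u). *)
Inductive zf_derives (B : {set T}) : {set T} -> Prop :=
| zf_refl : zf_derives B B
| zf_step (C : {set T}) (u w : T) :
    zf_derives B C -> u \in C -> w \notin C -> nbhd u :\: C = [set w] ->
    zf_derives B (w |: C).

Definition zero_forcing (B : {set T}) : Prop := zf_derives B [set: T].

Definition minimal_zero_forcing (B : {set T}) : Prop :=
  zero_forcing B /\ forall B' : {set T}, B' \subset B -> zero_forcing B' -> B' = B.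

Definition fort (F : {set T}) : Prop :=
  F != set0 /\ forall v, v \notin F -> #|nbhd v :&: F| != 1.

Definition private_fort (S : {set T}) (x : T) (F : {set T}) : Prop :=
  fort F /\ S :&: F = [set x].

Definition ZIr_set (S : {set T}) : Prop :=
  forall x, x \in S -> exists F, private_fort S x F.

Definition maximal_ZIr_set (S : {set T}) : Prop :=
  ZIr_set S /\ forall S' : {set T}, S \subset S' -> ZIr_set S' -> S' = S.

End Graphs.

Definition is_min_card (T : finType) (P : {set T} -> Prop) (k : nat) : Prop :=
  (exists S, P S /\ #|S| = k) /\ (forall S, P S -> k <= #|S|).
Definition is_max_card (T : finType) (P : {set T} -> Prop) (k : nat) : Prop :=
  (exists S, P S /\ #|S| = k) /\ (forall S, P S -> #|S| <= k).

Definition Z_eq (T : finType) (adj : rel T) k := is_min_card (zero_forcing adj) k.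
Definition Zbar_eq (T : finType) (adj : rel T) k :=
  is_max_card (minimal_zero_forcing adj) k.
Definition zir_eq (T : finType) (adj : rel T) k :=
  is_min_card (maximal_ZIr_set adj) k.
Definition ZIR_eq (T : finType) (adj : rel T) k :=
  is_max_card (maximal_ZIr_set adj) k.

Definition cycle_adj (n : nat) : rel 'I_n :=
  fun i j => (val j == i.+1 %% n) || (val i == j.+1 %% n).
Arguments cycle_adj n : clear implicits.

From mathcomp Require Import all_boot zify.
Set Implicit Arguments. Unset Strict Implicit. Unset Printing Implicit Defensive.

(* A set is zero forcing iff it meets every fort.  In C_n every fort meets
   every edge {u, u+1}, while the complement of an independent set is a fort;
   so the zero forcing sets of C_n are the sets containing an edge, and the
   minimal ones are exactly the edges.  If S is independent, or |S| <= 2, then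
   the complement of S \ {x} is a private fort of x; conversely a ZIr-set with
   three vertices is independent, since the private fort of a third vertex
   would avoid an edge inside S.  Hence the edges are maximal ZIr-sets, and
   every ZIr-set has at most floor(n/2) vertices, a bound attained by the even
   vertices. *)

Section ZeroForcingForts.
Variables (T : finType) (adj : rel T).

Lemma zf_derives_sub B C : zf_derives adj B C -> B \subset C.
Proof.
elim=> [|D u w _ BD _ _ _]; first exact: subxx.
exact: subset_trans BD (subsetUr _ _).
Qed.

Lemma zf_derives_avoid_fort B C F :
  fort adj F -> B :&: F = set0 -> zf_derives adj B C -> C :&: F = set0.
Proof.
move=> [_ fortF] BF; elim=> [|D u w _ CF uC wC Nu] //.
rewrite setIUl CF setU0; apply/setP=> x; rewrite !inE.
apply/andP=> -[/eqP-> wF].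
have notinD y : y \in F -> y \notin D.
  by move=> yF; apply/negP=> yD; have := in_set0 y; rewrite -CF inE yD yF.
have uF : u \notin F by apply: contraL uC; apply: notinD.
have NuF : nbhd adj u :&: F = [set w].
  apply/setP=> y; rewrite in_setI; apply/andP/set1P => [[Ny yF]|->].
    by apply/set1P; rewrite -Nu inE Ny notinD.
  by have := set11 w; rewrite -Nu inE => /andP[].
by have := fortF u uF; rewrite NuF cards1.
Qed.

Lemma zero_forcingP B :
  zero_forcing adj B <-> forall F, fort adj F -> B :&: F != set0.
Proof.
split=> [zfB F fortF | meetsB].
  apply/eqP=> BF; have := zf_derives_avoid_fort fortF BF zfB.
  by rewrite setTI => F0; case: fortF; rewrite F0 eqxx.
suff grow k C : #|~: C| = k -> zf_derives adj B C -> zero_forcing adj B.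
  exact: (grow _ B erefl (zf_refl _ _)).
elim: k C => [|k IH] C kC BC.
  by move: BC; rewrite -[C]setCK (cards0_eq kC) setC0.
have [/existsP[u /andP[uC /cards1P[w Nw]]] | noforce] :=
  boolP [exists u, (u \in C) && (#|nbhd adj u :&: ~: C| == 1)].
  have wC : w \notin C by have := set11 w; rewrite -Nw !inE => /andP[].
  apply: (IH (w |: C)); last by apply: zf_step BC uC wC _; rewrite setDE.
  by move: kC (cardsC C) (cardsC (w |: C)); rewrite cardsU1 wC; lia.
have fortCC : fort adj (~: C).
  split; first by rewrite -card_gt0 kC.
  move=> v; rewrite inE negbK => vC.
  by move/existsPn/(_ v): noforce; rewrite vC.
by have := meetsB _ fortCC; rewrite -setDE setD_eq0 (zf_derives_sub BC).
Qed.

Lemma private_fort_notin S x F y :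
  private_fort adj S x F -> y \in S -> y != x -> y \notin F.
Proof.
by move=> [_ SF] yS; apply: contraNN => yF; rewrite -in_set1 -SF inE yS.
Qed.

Lemma card_maximal_ZIr_set S :
  ZIr_set adj S ->
  (forall S' : {set T}, S \subset S' -> ZIr_set adj S' -> #|S'| <= #|S|) ->
  maximal_ZIr_set adj S.
Proof.
move=> ZIrS maxS; split=> // S' SS' ZIrS'.
by apply/esym/eqP; rewrite eqEcard SS' maxS.
Qed.

End ZeroForcingForts.

Section Cycle.
Variable n : nat.
Local Notation Cn := (cycle_adj n).
Implicit Types (S B F : {set 'I_n}) (u v w x : 'I_n).

Lemma cycle_adjE u v : Cn u v = (v == ordS u) || (u == ordS v).
Proof. by []. Qed.

Lemma val_ordS u : ordS u = (if u.+1 == n then 0 else u.+1) :> nat.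
Proof.
case: eqP => [/= ->|ne]; first by rewrite modnn.
by rewrite /= modn_small //; have := ltn_ord u; lia.
Qed.

Lemma val_iter_ordS u k : iter k (@ordS n) u = (u + k) %% n :> nat.
Proof.
elim: k => [|k IH] /=; first by rewrite addn0 modn_small.
by rewrite IH -addn1 modnDml addn1 addnS.
Qed.

Lemma iter_ordS_onto u v : exists k, iter k (@ordS n) u = v.
Proof.
exists (v + n - u); apply/val_inj => /=; rewrite val_iter_ordS subnKC.
  by rewrite modnDr modn_small.
by have := ltn_ord u; lia.
Qed.

(* If w and ordS w avoid the fort F, then ordS (ordS w) avoids F too, as it
   would otherwise be the only neighbour of ordS w in F; walking around the
   cycle, F would be empty. *)
Lemma fort_meets_edge F u : fort Cn F -> (u \in F) || (ordS u \in F).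
Proof.
move=> fortF; have [F0 fortF'] := fortF.
have step w : w \notin F -> ordS w \notin F -> ordS (ordS w) \notin F.
  move=> wF sF; apply: contraNN (fortF' _ sF) => ssF; apply/cards1P.
  exists (ordS (ordS w)); apply/setP=> y; rewrite !inE cycle_adjE.
  case: (y =P ordS (ordS w)) => [->|_] /=; first by rewrite ssF.
  by case: (ordS w =P ordS y) => [/ordS_inj <-|]; rewrite ?(negbTE wF).
apply: contraT; rewrite negb_or => /andP[uF suF].
have chain k : iter k (@ordS n) u \notin F /\ iter k.+1 (@ordS n) u \notin F.
  by elim: k => [|k [IH1 IH2]] //=; split=> //; apply: step.
have /set0Pn[v vF] := F0; have [k kv] := iter_ordS_onto u v.
by have [] := chain k; rewrite kv vF.
Qed.

Definition cycle_indep S := forall u, u \in S -> ordS u \notin S.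

Lemma edge_sub B u :
  u \in B -> ordS u \in B -> [set u; ordS u] \subset B.
Proof. by move=> uB suB; rewrite subUset !sub1set uB suB. Qed.

Lemma cycle_indep_card S : cycle_indep S -> #|S| <= n %/ 2.
Proof.
move=> indS; rewrite leq_divRL // muln2 -addnn.
have disj : S :&: @ordS n @: S = set0.
  apply/setP=> y; rewrite !inE; apply/andP=> -[yS /imsetP[x xS yx]].
  by move: yS; rewrite yx (negbTE (indS x xS)).
rewrite -{2}(card_imset S (@ordS_inj n)) -cardsUI disj cards0 addn0.
by rewrite -[X in _ <= X]card_ord max_card.
Qed.

Lemma double_ord_lt (i : 'I_(n %/ 2)) : (2 * i).+1 < n.
Proof. by have := ltn_ord i; lia. Qed.

Definition even_vertices : {set 'I_n} :=
  [set Ordinal (ltnW (double_ord_lt i)) | i : 'I_(n %/ 2)].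

Lemma card_even_vertices : #|even_vertices| = n %/ 2.
Proof.
rewrite card_imset ?card_ord // => i j /(congr1 (@nat_of_ord n)) /= ij.
by apply: ord_inj; lia.
Qed.

Lemma even_vertices_indep : cycle_indep even_vertices.
Proof.
move=> _ /imsetP[i _ ->]; apply/imsetP=> -[j _ /(congr1 (@nat_of_ord n))] /=.
by rewrite modn_small ?double_ord_lt //; lia.
Qed.

Hypothesis n_gt2 : 2 < n.

Lemma ordS_neq u : ordS u != u.
Proof.
by apply/eqP=> /(congr1 (@nat_of_ord n)); rewrite val_ordS; case: eqP; lia.
Qed.

Lemma ordS2_neq u : ordS (ordS u) != u.
Proof.
apply/eqP=> /(congr1 (@nat_of_ord n)).
move: (val_ordS (ordS u)) (val_ordS u) (ltn_ord u).
by case: eqP; case: eqP => /=; lia.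
Qed.

Lemma card_edge u : #|[set u; ordS u]| = 2.
Proof. by rewrite cards2 eq_sym ordS_neq. Qed.

Lemma card_le1_cycle_indep S : #|S| <= 1 -> cycle_indep S.
Proof.
move=> /card_le1_eqP S1 u uS; apply: contraNN (ordS_neq u) => suS.
by apply/eqP; apply: S1.
Qed.

Lemma cycle_indep_fort S x :
  cycle_indep S -> x \notin S -> fort Cn (~: S).
Proof.
move=> indS xS; split; first by apply/set0Pn; exists x; rewrite inE.
move=> v; rewrite inE negbK => vS; apply/cards1P => -[y Ny].
have in_Ny z : Cn v z -> z \notin S -> z = y.
  by move=> vz zS; apply/set1P; rewrite -Ny !inE vz zS.
have succ_y : ordS v = y by apply: in_Ny (indS v vS); rewrite cycle_adjE eqxx.
have pred_y : ord_pred v = y.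
  apply: in_Ny; first by rewrite cycle_adjE ord_predK eqxx orbT.
  by apply/negP=> pS; have := indS _ pS; rewrite ord_predK vS.
by move: (ordS2_neq v); rewrite succ_y -pred_y ord_predK eqxx.
Qed.

Lemma cycle_zero_forcingP B :
  zero_forcing Cn B <-> exists2 u, u \in B & ordS u \in B.
Proof.
split=> [zfB | [u uB suB]]; last first.
  apply/zero_forcingP=> F /(fort_meets_edge u) /orP[uF | suF]; apply/set0Pn.
    by exists u; rewrite inE uB.
  by exists (ordS u); rewrite inE suB.
have [/exists_inP[u uB suB] | /exists_inPn indB] :=
  boolP [exists u in B, ordS u \in B]; first by exists u.
have [x xB] : exists x, x \notin B.
  have v : 'I_n := Ordinal (ltnW (ltnW n_gt2)).
  by case vB: (v \in B); [exists (ordS v); apply: indB | exists v; rewrite vB].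
move/zero_forcingP: zfB => /(_ _ (cycle_indep_fort indB xB)).
by rewrite setICr eqxx.
Qed.

Lemma cycle_zero_forcing_card B : zero_forcing Cn B -> 2 <= #|B|.
Proof.
move/cycle_zero_forcingP=> [u uB suB].
by rewrite -(card_edge u) subset_leq_card // edge_sub.
Qed.

Lemma cycle_minimal_zero_forcingP B :
  minimal_zero_forcing Cn B <-> exists u, B = [set u; ordS u].
Proof.
have edge_zf u : zero_forcing Cn [set u; ordS u].
  by apply/cycle_zero_forcingP; exists u; rewrite !inE eqxx ?orbT.
split=> [[zfB minB] | [u ->]].
  have /cycle_zero_forcingP[u uB suB] := zfB.
  by exists u; apply/esym/minB; [apply: edge_sub | apply: edge_zf].
split=> // B' B'u zfB'; apply/eqP; rewrite eqEcard B'u card_edge.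
exact: cycle_zero_forcing_card.
Qed.

Lemma cycle_indep_private_fort S x :
  x \in S -> cycle_indep (S :\ x) -> private_fort Cn S x (~: (S :\ x)).
Proof.
move=> xS indS; split.
  by apply: (cycle_indep_fort (x := x) indS); rewrite setD11.
apply/setP=> y; rewrite !inE.
by case: (y =P x) => [->|]; rewrite ?xS ?andbT ?andbN.
Qed.

Lemma cycle_indep_ZIr S : cycle_indep S -> ZIr_set Cn S.
Proof.
move=> indS x xS; exists (~: (S :\ x)); apply: cycle_indep_private_fort => //.
by move=> u /setD1P[_ uS]; rewrite inE negb_and indS ?orbT.
Qed.

Lemma card_le2_ZIr S : #|S| <= 2 -> ZIr_set Cn S.
Proof.
move=> S2 x xS; exists (~: (S :\ x)); apply: cycle_indep_private_fort => //.
by apply: card_le1_cycle_indep; move: S2; rewrite (cardsD1 x S) xS.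
Qed.

(* In a ZIr-set with a third vertex x, the private fort of x misses both ends
   of any edge inside the set. *)
Lemma ZIr_cycle_indep S : ZIr_set Cn S -> 2 < #|S| -> cycle_indep S.
Proof.
move=> ZIrS S_gt2 u uS; apply/negP=> suS.
have [x xS] : exists2 x, x \in S & x \notin [set u; ordS u].
  apply/subsetPn; apply: contraTN S_gt2 => /subset_leq_card.
  by rewrite card_edge -leqNgt.
rewrite !inE negb_or => /andP[xu xsu]; have [F privF] := ZIrS x xS.
have := fort_meets_edge u privF.1.
by rewrite !(negbTE (private_fort_notin privF _ _)) // eq_sym.
Qed.

Lemma edge_maximal_ZIr u : maximal_ZIr_set Cn [set u; ordS u].
Proof.
apply: card_maximal_ZIr_set => [|S' uS' ZIrS'].
  by apply: card_le2_ZIr; rewrite card_edge.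
rewrite card_edge leqNgt; apply/negP=> /(ZIr_cycle_indep ZIrS') indS'.
move/subsetP: uS' => uS'.
by have /negP[] := indS' u (uS' u (set21 _ _)); apply: uS' (set22 _ _).
Qed.

Lemma maximal_ZIr_card_ge2 S : maximal_ZIr_set Cn S -> 2 <= #|S|.
Proof.
move=> [_ maxS]; rewrite leqNgt; apply/negP=> S_le1.
have /card_le1_eqP S1 := S_le1.
have [u Su] : exists u, S \subset [set u; ordS u].
  have [->|[u uS]] := set_0Vmem S.
    by exists (Ordinal (ltnW (ltnW n_gt2))); apply: sub0set.
  by exists u; apply/subsetP=> y yS; rewrite (S1 _ _ uS yS) set21.
have edgeZIr := card_le2_ZIr (eq_leq (card_edge u)).
by move: S_le1; rewrite -(maxS _ Su edgeZIr) card_edge.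
Qed.

Lemma ZIr_card_le_half S : 4 <= n -> ZIr_set Cn S -> #|S| <= n %/ 2.
Proof.
move=> n_ge4 ZIrS; have [S_le2 | S_gt2] := leqP #|S| 2.
  by apply: leq_trans S_le2 _; rewrite leq_divRL.
exact/cycle_indep_card/ZIr_cycle_indep.
Qed.

Lemma even_vertices_maximal_ZIr : 4 <= n -> maximal_ZIr_set Cn even_vertices.
Proof.
move=> n_ge4; apply: card_maximal_ZIr_set => [|S' _ ZIrS'].
  exact/cycle_indep_ZIr/even_vertices_indep.
by rewrite card_even_vertices ZIr_card_le_half.
Qed.

End Cycle.

Theorem proposition3p2 (n : nat) : 4 <= n ->
  [/\ zir_eq (cycle_adj n) 2, Z_eq (cycle_adj n) 2,
      Zbar_eq (cycle_adj n) 2 & ZIR_eq (cycle_adj n) (n %/ 2)].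
Proof.
move=> n_ge4; have n_gt2 : 2 < n by lia.
have v : 'I_n := Ordinal (ltnW (ltnW n_gt2)).
have edge2 := card_edge n_gt2 v.
split; split.
- by exists [set v; ordS v]; split=> //; apply: edge_maximal_ZIr.
- by move=> S; apply: maximal_ZIr_card_ge2.
- exists [set v; ordS v]; split=> //.
  by apply/(cycle_zero_forcingP n_gt2); exists v; rewrite ?set21 ?set22.
- by move=> B; apply: cycle_zero_forcing_card.
- exists [set v; ordS v]; split=> //.
  by apply/(cycle_minimal_zero_forcingP n_gt2); exists v.
- by move=> B /(cycle_minimal_zero_forcingP n_gt2) [u ->]; rewrite card_edge.
- exists (even_vertices n); split; last exact: card_even_vertices.
  exact: even_vertices_maximal_ZIr.
- by move=> S [ZIrS _]; apply: ZIr_card_le_half.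
Qed.
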